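(* In the CCV $\lambda\mu$-calculus, the reduction relation consisting only of vertical reductions $\mu k.[k]M\to M$ (with $k$ not free in $M$) is strongly normalizing and confluent.
   Context: CCV $\lambda\mu$-calculus. Ordinary variables $x,y,\dots$ and continuation variables $k,l,\dots$ are disjoint. Terms $M ::= x \mid \lambda x.M \mid MM \mid (M\ \mathsf{where}\ x:=M) \mid \mu k.J$, jumps $J ::= [k]M \mid (J\ \mathsf{where}\ x:=M)$, where $(L\ \mathsf{where}\ x:=M)$ means $\mathsf{let}\ x=M\ \mathsf{in}\ L$ ($x$ bound in $L$ only); terms are identified up to $\alpha$-conversion and the congruence generated by (E1) $(L\ \mathsf{where}\ x:=(M\ \mathsf{where}\ y:=N))=((L\ \mathsf{where}\ x:=M)\ \mathsf{where}\ y:=N)$ if $y$ not free in $L$; (E2) $((\mu k.J)\ \mathsf{where}\ x:=M)=\mu k.(J\ \mathsf{where}\ x:=M)$ if $k$ not free in $M$; (E3) $[k](L\ \mathsf{where}\ x:=M)=([k]L\ \mathsf{where}\ x:=M)$. A vertical reduction is the contraction of a subterm $\mu k.[k]M$ with $k$ not free in $M$ to $M$, anywhere inside a term or jump. *)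

(* CCV lambda-mu-calculus with de Bruijn indices.
   Ordinary variables and continuation variables live in two separate
   de Bruijn index spaces, so alpha-conversion is built in. *)
From Stdlib Require Import Arith Relations.

Inductive term : Type :=
| Var (n : nat)
| Lam (t : term)
| App (t u : term)
| Where (l m : term)             (* (l where x := m), x = var 0 bound in l only *)
| Mu (j : jump)                  (* mu k. j (binds continuation var 0) *)
with jump : Type :=
| Jmp (k : nat) (t : term)
| JWhere (j : jump) (m : term).  (* (j where x := m), x = var 0 bound in j only *)

Fixpoint shv_t (c : nat) (t : term) : term :=
  match t with
  | Var n => Var (if c <=? n then S n else n)
  | Lam t => Lam (shv_t (S c) t)
  | App t u => App (shv_t c t) (shv_t c u)
  | Where l m => Where (shv_t (S c) l) (shv_t c m)
  | Mu j => Mu (shv_j c j)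
  end
with shv_j (c : nat) (j : jump) : jump :=
  match j with
  | Jmp k t => Jmp k (shv_t c t)
  | JWhere j m => JWhere (shv_j (S c) j) (shv_t c m)
  end.

Fixpoint shc_t (c : nat) (t : term) : term :=
  match t with
  | Var n => Var n
  | Lam t => Lam (shc_t c t)
  | App t u => App (shc_t c t) (shc_t c u)
  | Where l m => Where (shc_t c l) (shc_t c m)
  | Mu j => Mu (shc_j (S c) j)
  end
with shc_j (c : nat) (j : jump) : jump :=
  match j with
  | Jmp k t => Jmp (if c <=? k then S k else k) (shc_t c t)
  | JWhere j m => JWhere (shc_j c j) (shc_t c m)
  end.

(* un-shift continuation variables > c by one (used when c does not occur) *)
Fixpoint unshc_t (c : nat) (t : term) : term :=
  match t with
  | Var n => Var n
  | Lam t => Lam (unshc_t c t)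
  | App t u => App (unshc_t c t) (unshc_t c u)
  | Where l m => Where (unshc_t c l) (unshc_t c m)
  | Mu j => Mu (unshc_j (S c) j)
  end
with unshc_j (c : nat) (j : jump) : jump :=
  match j with
  | Jmp k t => Jmp (if c <? k then pred k else k) (unshc_t c t)
  | JWhere j m => JWhere (unshc_j c j) (unshc_t c m)
  end.

Fixpoint cfree_t (c : nat) (t : term) : bool :=
  match t with
  | Var _ => false
  | Lam t => cfree_t c t
  | App t u => cfree_t c t || cfree_t c u
  | Where l m => cfree_t c l || cfree_t c m
  | Mu j => cfree_j (S c) j
  end
with cfree_j (c : nat) (j : jump) : bool :=
  match j with
  | Jmp k t => Nat.eqb k c || cfree_t c t
  | JWhere j m => cfree_j c j || cfree_t c m
  end.

Inductive ceq1_t : term -> term -> Prop :=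
| E1_t (L M N : term) :
    (* (L where x := (M where y := N)) = ((L where x := M) where y := N) *)
    ceq1_t (Where L (Where M N)) (Where (Where (shv_t 1 L) M) N)
| E2 (J : jump) (M : term) :
    (* ((mu k. J) where x := M) = mu k. (J where x := M), k not free in M *)
    ceq1_t (Where (Mu J) M) (Mu (JWhere J (shc_t 0 M)))
| c1_lam t t' : ceq1_t t t' -> ceq1_t (Lam t) (Lam t')
| c1_appl t t' u : ceq1_t t t' -> ceq1_t (App t u) (App t' u)
| c1_appr t u u' : ceq1_t u u' -> ceq1_t (App t u) (App t u')
| c1_wherel l l' m : ceq1_t l l' -> ceq1_t (Where l m) (Where l' m)
| c1_wherer l m m' : ceq1_t m m' -> ceq1_t (Where l m) (Where l m')
| c1_mu j j' : ceq1_j j j' -> ceq1_t (Mu j) (Mu j')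
with ceq1_j : jump -> jump -> Prop :=
| E1_j (J : jump) (M N : term) :
    ceq1_j (JWhere J (Where M N)) (JWhere (JWhere (shv_j 1 J) M) N)
| E3 (k : nat) (L M : term) :
    ceq1_j (Jmp k (Where L M)) (JWhere (Jmp k L) M)
| c1_jmp k t t' : ceq1_t t t' -> ceq1_j (Jmp k t) (Jmp k t')
| c1_jwherel j j' m : ceq1_j j j' -> ceq1_j (JWhere j m) (JWhere j' m)
| c1_jwherer j m m' : ceq1_t m m' -> ceq1_j (JWhere j m) (JWhere j m').

Definition ceq_t : relation term := clos_refl_sym_trans term ceq1_t.

Inductive vstep_t : term -> term -> Prop :=
| v_redex (M : term) :
    cfree_t 0 M = false -> vstep_t (Mu (Jmp 0 M)) (unshc_t 0 M)
| v_lam t t' : vstep_t t t' -> vstep_t (Lam t) (Lam t')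
| v_appl t t' u : vstep_t t t' -> vstep_t (App t u) (App t' u)
| v_appr t u u' : vstep_t u u' -> vstep_t (App t u) (App t u')
| v_wherel l l' m : vstep_t l l' -> vstep_t (Where l m) (Where l' m)
| v_wherer l m m' : vstep_t m m' -> vstep_t (Where l m) (Where l m')
| v_mu j j' : vstep_j j j' -> vstep_t (Mu j) (Mu j')
with vstep_j : jump -> jump -> Prop :=
| v_jmp k t t' : vstep_t t t' -> vstep_j (Jmp k t) (Jmp k t')
| v_jwherel j j' m : vstep_j j j' -> vstep_j (JWhere j m) (JWhere j' m)
| v_jwherer j m m' : vstep_t m m' -> vstep_j (JWhere j m) (JWhere j m').

Definition vred (M N : term) : Prop :=
  exists M' N', ceq_t M M' /\ vstep_t M' N' /\ ceq_t N' N.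

Definition vred_star : relation term := clos_refl_trans term vred.

Definition vred_SN : Prop := forall M : term, Acc (fun N M => vred M N) M.

Definition vred_confluent : Prop :=
  forall M N1 N2, vred_star M N1 -> vred_star M N2 ->
    exists P1 P2, vred_star N1 P1 /\ vred_star N2 P2 /\ ceq_t P1 P2.

(* Reduction is strongly normalizing because every vertical step erases one
   mu-binder while the equations E1-E3 preserve their number.

   For confluence we compute a canonical form [norm_t M]: it associates all
   where-chains to the left (E1), pulls where-bindings out of jumps (E3) and out
   of mu-binders they do not refer to (E2 from right to left), and contracts the
   vertical redexes that then appear.  [norm_t] is invariant under E1-E3 and
   under vertical steps, and every M reduces to a term congruent to [norm_t M].
   Two reducts of M therefore reach terms congruent to the same [norm_t M]. *)
From Stdlib Require Import Relations Arith Lia Bool Wf_nat.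

Scheme term_mut_ind := Induction for term Sort Prop
with jump_mut_ind := Induction for jump Sort Prop.
Combined Scheme term_jump_ind from term_mut_ind, jump_mut_ind.

Scheme ceq1_t_mut_ind := Induction for ceq1_t Sort Prop
with ceq1_j_mut_ind := Induction for ceq1_j Sort Prop.
Combined Scheme ceq1_ind from ceq1_t_mut_ind, ceq1_j_mut_ind.

Scheme vstep_t_mut_ind := Induction for vstep_t Sort Prop
with vstep_j_mut_ind := Induction for vstep_j Sort Prop.
Combined Scheme vstep_ind from vstep_t_mut_ind, vstep_j_mut_ind.

Ltac split_orb_false := repeat match goal with
  | H : _ || _ = false |- _ => apply orb_false_iff in H as [? ?] end.

Ltac case_index := repeat match goal with
  | |- context[?a <=? ?b] => destruct (Nat.leb_spec a b)
  | |- context[?a <? ?b] => destruct (Nat.ltb_spec a b)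
  | |- context[?a =? ?b] => destruct (Nat.eqb_spec a b)
  | H : context[?a =? ?b] |- _ => destruct (Nat.eqb_spec a b)
  | |- context[match ?k with 0 => _ | S _ => _ end] => destruct k
  end; try lia.

Ltac apply_IH := match goal with IH : forall _, _ |- _ => apply IH end.

Ltac solve_shift :=
  intros; simpl in *; split_orb_false; f_equal;
  try solve [repeat (apply_IH || lia || eauto)];
  case_index; try (f_equal; lia).

Lemma unshc_shc :
  (forall t c, unshc_t c (shc_t c t) = t) /\
  (forall j c, unshc_j c (shc_j c j) = j).
Proof. apply term_jump_ind; solve_shift. Qed.

Lemma shc_unshc :
  (forall t c, cfree_t c t = false -> shc_t c (unshc_t c t) = t) /\
  (forall j c, cfree_j c j = false -> shc_j c (unshc_j c j) = j).
Proof. apply term_jump_ind; solve_shift. Qed.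

Lemma cfree_shc :
  (forall t c, cfree_t c (shc_t c t) = false) /\
  (forall j c, cfree_j c (shc_j c j) = false).
Proof. apply term_jump_ind; intros; simpl; rewrite ?H, ?H0; auto; case_index. Qed.

Lemma cfree_shc_lt :
  (forall t x c, x < c -> cfree_t x (shc_t c t) = cfree_t x t) /\
  (forall j x c, x < c -> cfree_j x (shc_j c j) = cfree_j x j).
Proof.
  apply term_jump_ind; intros; simpl; rewrite ?H, ?H0; auto; try lia; case_index; reflexivity.
Qed.

Lemma cfree_shv :
  (forall t c d, cfree_t d (shv_t c t) = cfree_t d t) /\
  (forall j c d, cfree_j d (shv_j c j) = cfree_j d j).
Proof. apply term_jump_ind; intros; simpl; rewrite ?H, ?H0; auto. Qed.

Lemma shv_shv :
  (forall t c d, c <= d -> shv_t (S d) (shv_t c t) = shv_t c (shv_t d t)) /\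
  (forall j c d, c <= d -> shv_j (S d) (shv_j c j) = shv_j c (shv_j d j)).
Proof. apply term_jump_ind; solve_shift. Qed.

Lemma shv_shc :
  (forall t c d, shv_t c (shc_t d t) = shc_t d (shv_t c t)) /\
  (forall j c d, shv_j c (shc_j d j) = shc_j d (shv_j c j)).
Proof. apply term_jump_ind; solve_shift. Qed.

Lemma unshc_shv :
  (forall t c d, unshc_t c (shv_t d t) = shv_t d (unshc_t c t)) /\
  (forall j c d, unshc_j c (shv_j d j) = shv_j d (unshc_j c j)).
Proof. apply term_jump_ind; solve_shift. Qed.

Lemma unshc_shc_le :
  (forall t c d, c <= d -> cfree_t c t = false ->
     unshc_t c (shc_t (S d) t) = shc_t d (unshc_t c t)) /\
  (forall j c d, c <= d -> cfree_j c j = false ->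
     unshc_j c (shc_j (S d) j) = shc_j d (unshc_j c j)).
Proof. apply term_jump_ind; solve_shift. Qed.

(** * The canonical form *)

Fixpoint norm_where (l m : term) {struct m} : term :=
  match m with
  | Where a b => norm_where (norm_where (shv_t 1 l) a) b
  | _ => Where l m
  end.

Fixpoint norm_jwhere (j : jump) (m : term) {struct m} : jump :=
  match m with
  | Where a b => norm_jwhere (norm_jwhere (shv_j 1 j) a) b
  | _ => JWhere j m
  end.

Fixpoint norm_jmp (k : nat) (t : term) : jump :=
  match t with
  | Where a b => norm_jwhere (norm_jmp k a) b
  | _ => Jmp k t
  end.

Fixpoint norm_mu (j : jump) : term :=
  match j with
  | JWhere j' m => if cfree_t 0 m then Mu j else norm_where (norm_mu j') (unshc_t 0 m)
  | Jmp k t => if (k =? 0) && negb (cfree_t 0 t) then unshc_t 0 t else Mu j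
  end.

Fixpoint norm_t (t : term) : term :=
  match t with
  | Var n => Var n
  | Lam t => Lam (norm_t t)
  | App t u => App (norm_t t) (norm_t u)
  | Where l m => norm_where (norm_t l) (norm_t m)
  | Mu j => norm_mu (norm_j j)
  end
with norm_j (j : jump) : jump :=
  match j with
  | Jmp k t => norm_jmp k (norm_t t)
  | JWhere j m => norm_jwhere (norm_j j) (norm_t m)
  end.

Definition is_where (t : term) : bool :=
  match t with Where _ _ => true | _ => false end.

Lemma norm_where_nW l m : is_where m = false -> norm_where l m = Where l m.
Proof. destruct m; simpl; congruence. Qed.

Lemma norm_jwhere_nW j m : is_where m = false -> norm_jwhere j m = JWhere j m.
Proof. destruct m; simpl; congruence. Qed.

Lemma norm_jmp_nW k m : is_where m = false -> norm_jmp k m = Jmp k m.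
Proof. destruct m; simpl; congruence. Qed.

Lemma is_where_shc c t : is_where (shc_t c t) = is_where t.
Proof. destruct t; reflexivity. Qed.

Lemma is_where_shv c t : is_where (shv_t c t) = is_where t.
Proof. destruct t; reflexivity. Qed.

Lemma is_where_unshc c t : is_where (unshc_t c t) = is_where t.
Proof. destruct t; reflexivity. Qed.

Lemma shv_norm_where : forall m l c,
  shv_t c (norm_where l m) = norm_where (shv_t (S c) l) (shv_t c m).
Proof.
  induction m; intros; try reflexivity.
  simpl. rewrite IHm2, IHm1, (proj1 shv_shv); auto; lia.
Qed.

Lemma shv_norm_jwhere : forall m j c,
  shv_j c (norm_jwhere j m) = norm_jwhere (shv_j (S c) j) (shv_t c m).
Proof.
  induction m; intros; try reflexivity.
  simpl. rewrite IHm2, IHm1, (proj2 shv_shv); auto; lia.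
Qed.

Lemma shv_norm_jmp : forall t k c, shv_j c (norm_jmp k t) = norm_jmp k (shv_t c t).
Proof. induction t; intros; try reflexivity. simpl. rewrite shv_norm_jwhere, IHt1. reflexivity. Qed.

Lemma shv_norm_mu : forall j c, shv_t c (norm_mu j) = norm_mu (shv_j c j).
Proof.
  induction j; intros; simpl; rewrite (proj1 cfree_shv).
  - destruct (_ && _); [symmetry; apply (proj1 unshc_shv) | reflexivity].
  - destruct (cfree_t 0 _); [reflexivity|].
    rewrite shv_norm_where, IHj, (proj1 unshc_shv). reflexivity.
Qed.

Lemma shc_norm_where : forall m l c,
  shc_t c (norm_where l m) = norm_where (shc_t c l) (shc_t c m).
Proof.
  induction m; intros; try reflexivity.
  simpl. rewrite IHm2, IHm1, (proj1 shv_shc). reflexivity.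
Qed.

Lemma shc_norm_jwhere : forall m j c,
  shc_j c (norm_jwhere j m) = norm_jwhere (shc_j c j) (shc_t c m).
Proof.
  induction m; intros; try reflexivity.
  simpl. rewrite IHm2, IHm1, (proj2 shv_shc). reflexivity.
Qed.

Lemma shc_norm_jmp : forall t k c,
  shc_j c (norm_jmp k t) = norm_jmp (if c <=? k then S k else k) (shc_t c t).
Proof. induction t; intros; try reflexivity. simpl. rewrite shc_norm_jwhere, IHt1. reflexivity. Qed.

Lemma shc_norm_mu : forall j c, shc_t c (norm_mu j) = norm_mu (shc_j (S c) j).
Proof.
  induction j; intros; simpl.
  - destruct k; simpl.
    + rewrite (proj1 cfree_shc_lt) by lia.
      destruct (cfree_t 0 t) eqn:E; simpl; [reflexivity|].
      rewrite (proj1 unshc_shc_le); auto; lia.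
    + destruct (c <=? k); reflexivity.
  - rewrite (proj1 cfree_shc_lt) by lia.
    destruct (cfree_t 0 _) eqn:E; [reflexivity|].
    rewrite shc_norm_where, IHj, (proj1 unshc_shc_le); auto; lia.
Qed.

Lemma norm_shv :
  (forall t c, norm_t (shv_t c t) = shv_t c (norm_t t)) /\
  (forall j c, norm_j (shv_j c j) = shv_j c (norm_j j)).
Proof.
  apply term_jump_ind; intros; simpl; rewrite ?H, ?H0;
    rewrite ?shv_norm_where, ?shv_norm_mu, ?shv_norm_jmp, ?shv_norm_jwhere; reflexivity.
Qed.

Lemma norm_shc :
  (forall t c, norm_t (shc_t c t) = shc_t c (norm_t t)) /\
  (forall j c, norm_j (shc_j c j) = shc_j c (norm_j j)).
Proof.
  apply term_jump_ind; intros; simpl; rewrite ?H, ?H0;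
    rewrite ?shc_norm_where, ?shc_norm_mu, ?shc_norm_jmp, ?shc_norm_jwhere; reflexivity.
Qed.

Lemma norm_where_assoc : forall c a b,
  norm_where a (norm_where b c) = norm_where (norm_where (shv_t 1 a) b) c.
Proof.
  induction c; intros; try reflexivity.
  simpl. rewrite IHc2, IHc1, shv_norm_where, (proj1 shv_shv a 1 1) by lia. reflexivity.
Qed.

Lemma norm_jwhere_assoc : forall c j b,
  norm_jwhere j (norm_where b c) = norm_jwhere (norm_jwhere (shv_j 1 j) b) c.
Proof.
  induction c; intros; try reflexivity.
  simpl. rewrite IHc2, IHc1, shv_norm_jwhere, (proj2 shv_shv j 1 1) by lia. reflexivity.
Qed.

Lemma norm_jmp_where : forall b a k,
  norm_jmp k (norm_where a b) = norm_jwhere (norm_jmp k a) b.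
Proof.
  induction b; intros; try reflexivity.
  simpl. rewrite IHb2, IHb1, shv_norm_jmp. reflexivity.
Qed.

Lemma norm_mu_jwhere_shc : forall m j,
  norm_mu (norm_jwhere j (shc_t 0 m)) = norm_where (norm_mu j) m.
Proof.
  induction m; intros;
    try (rewrite norm_jwhere_nW by (rewrite is_where_shc; reflexivity); cbn [norm_mu];
         rewrite (proj1 cfree_shc), (proj1 unshc_shc); reflexivity).
  simpl. rewrite IHm2, IHm1, shv_norm_mu. reflexivity.
Qed.

Lemma norm_ceq1 :
  (forall t u, ceq1_t t u -> norm_t t = norm_t u) /\
  (forall j k, ceq1_j j k -> norm_j j = norm_j k).
Proof.
  apply ceq1_ind; intros; simpl; try congruence.
  - rewrite (proj1 norm_shv), norm_where_assoc. reflexivity.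
  - rewrite (proj1 norm_shc), norm_mu_jwhere_shc. reflexivity.
  - rewrite (proj2 norm_shv), norm_jwhere_assoc. reflexivity.
  - apply norm_jmp_where.
Qed.

Lemma norm_ceq t u : ceq_t t u -> norm_t t = norm_t u.
Proof. induction 1; try congruence. apply (proj1 norm_ceq1); assumption. Qed.

(* Canonical forms are flat; on flat terms the where-chain built by [norm_jmp 0]
   is exactly the one that [norm_mu] takes apart again (see [norm_mu_jmp0]). *)
Fixpoint where_flat (t : term) : bool :=
  match t with Where a b => where_flat a && negb (is_where b) | _ => true end.

Fixpoint jmp_flat (j : jump) : bool :=
  match j with Jmp _ t => negb (is_where t) | JWhere j _ => jmp_flat j end.

Lemma where_flat_shv : forall t c, where_flat (shv_t c t) = where_flat t.
Proof. induction t; intros; simpl; rewrite ?IHt1, ?is_where_shv; auto. Qed.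

Lemma jmp_flat_shv : forall j c, jmp_flat (shv_j c j) = jmp_flat j.
Proof. induction j; intros; simpl; rewrite ?IHj, ?is_where_shv; auto. Qed.

Lemma where_flat_norm_where : forall m l, where_flat l = true -> where_flat (norm_where l m) = true.
Proof.
  induction m; intros; simpl; rewrite ?H; auto.
  apply IHm2, IHm1. rewrite where_flat_shv; assumption.
Qed.

Lemma jmp_flat_norm_jwhere : forall m j, jmp_flat j = true -> jmp_flat (norm_jwhere j m) = true.
Proof.
  induction m; intros; simpl; rewrite ?H; auto.
  apply IHm2, IHm1. rewrite jmp_flat_shv; assumption.
Qed.

Lemma jmp_flat_norm_jmp : forall t k, jmp_flat (norm_jmp k t) = true.
Proof. induction t; intros; simpl; auto. apply jmp_flat_norm_jwhere; auto. Qed.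

Lemma where_flat_norm_mu : forall j, jmp_flat j = true -> where_flat (norm_mu j) = true.
Proof.
  induction j; intros; simpl in *.
  - destruct (_ && _); auto. destruct t; simpl in *; auto; discriminate.
  - destruct (cfree_t 0 _); auto. apply where_flat_norm_where; auto.
Qed.

Lemma where_flat_norm :
  (forall t, where_flat (norm_t t) = true) /\ (forall j, jmp_flat (norm_j j) = true).
Proof.
  apply term_jump_ind; intros; simpl; auto.
  - apply where_flat_norm_where; assumption.
  - apply where_flat_norm_mu; assumption.
  - apply jmp_flat_norm_jmp.
  - apply jmp_flat_norm_jwhere; assumption.
Qed.

Lemma norm_mu_jmp0 : forall X, where_flat X = true -> cfree_t 0 X = false ->
  norm_mu (norm_jmp 0 X) = unshc_t 0 X.
Proof.
  induction X; intros Hflat Hfree;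
    try (rewrite norm_jmp_nW by reflexivity; simpl in *; rewrite ?Hfree; reflexivity).
  simpl in *. apply andb_prop in Hflat as [Hflat1 Hflat2].
  apply orb_false_iff in Hfree as [Hfree1 Hfree2].
  destruct (is_where X2) eqn:E; [discriminate|].
  rewrite norm_jwhere_nW by assumption. simpl.
  rewrite Hfree2, IHX1, norm_where_nW by (rewrite ?is_where_unshc; auto). reflexivity.
Qed.

Lemma norm_vstep :
  (forall t u, vstep_t t u -> norm_t t = norm_t u) /\
  (forall j k, vstep_j j k -> norm_j j = norm_j k).
Proof.
  apply vstep_ind; intros; simpl; try congruence.
  rewrite <- ((proj1 shc_unshc) M 0 e) at 1.
  rewrite (proj1 norm_shc), norm_mu_jmp0, (proj1 unshc_shc); [reflexivity| |].
  - rewrite <- (proj1 norm_shc). apply (proj1 where_flat_norm).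
  - apply (proj1 cfree_shc).
Qed.

Lemma norm_vred M N : vred M N -> norm_t M = norm_t N.
Proof.
  intros (M' & N' & HM & Hstep & HN).
  rewrite (norm_ceq _ _ HM), (proj1 norm_vstep _ _ Hstep), (norm_ceq _ _ HN). reflexivity.
Qed.

Lemma norm_vred_star M N : vred_star M N -> norm_t M = norm_t N.
Proof. induction 1; try congruence. apply norm_vred; assumption. Qed.

(** * Reaching the canonical form *)

Definition vconv1_t (a b : term) : Prop := vstep_t a b \/ ceq1_t a b \/ ceq1_t b a.
Definition vconv1_j (a b : jump) : Prop := vstep_j a b \/ ceq1_j a b \/ ceq1_j b a.
Definition vconv_t : relation term := clos_refl_trans term vconv1_t.
Definition vconv_j : relation jump := clos_refl_trans jump vconv1_j.

Lemma clos_rt_map {A B} (RA : relation A) (RB : relation B) (f : A -> B) :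
  (forall x y, RA x y -> RB (f x) (f y)) ->
  forall x y, clos_refl_trans A RA x y -> clos_refl_trans B RB (f x) (f y).
Proof. intros Hf x y; induction 1; eauto using rt_step, rt_refl, rt_trans. Qed.

Ltac vconv_context :=
  intros ? ? [?|[?|?]];
  [left | right; left | right; right]; constructor; assumption.

Lemma vconv_lam t t' : vconv_t t t' -> vconv_t (Lam t) (Lam t').
Proof. apply (clos_rt_map _ _ Lam); vconv_context. Qed.
Lemma vconv_appl t t' u : vconv_t t t' -> vconv_t (App t u) (App t' u).
Proof. apply (clos_rt_map _ _ (fun x => App x u)); vconv_context. Qed.
Lemma vconv_appr t u u' : vconv_t u u' -> vconv_t (App t u) (App t u').
Proof. apply (clos_rt_map _ _ (App t)); vconv_context. Qed.
Lemma vconv_wherel l l' m : vconv_t l l' -> vconv_t (Where l m) (Where l' m).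
Proof. apply (clos_rt_map _ _ (fun x => Where x m)); vconv_context. Qed.
Lemma vconv_wherer l m m' : vconv_t m m' -> vconv_t (Where l m) (Where l m').
Proof. apply (clos_rt_map _ _ (Where l)); vconv_context. Qed.
Lemma vconv_mu j j' : vconv_j j j' -> vconv_t (Mu j) (Mu j').
Proof. apply (clos_rt_map _ _ Mu); vconv_context. Qed.
Lemma vconv_jmp k t t' : vconv_t t t' -> vconv_j (Jmp k t) (Jmp k t').
Proof. apply (clos_rt_map _ _ (Jmp k)); vconv_context. Qed.
Lemma vconv_jwherel j j' m : vconv_j j j' -> vconv_j (JWhere j m) (JWhere j' m).
Proof. apply (clos_rt_map _ _ (fun x => JWhere x m)); vconv_context. Qed.
Lemma vconv_jwherer j m m' : vconv_t m m' -> vconv_j (JWhere j m) (JWhere j m').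
Proof. apply (clos_rt_map _ _ (JWhere j)); vconv_context. Qed.

Lemma vconv_norm_where : forall m l, vconv_t (Where l m) (norm_where l m).
Proof.
  induction m; intros; try (rewrite norm_where_nW by reflexivity; apply rt_refl).
  eapply rt_trans; [apply rt_step; right; left; apply E1_t|].
  eapply rt_trans; [apply vconv_wherel, IHm1 | apply IHm2].
Qed.

Lemma vconv_norm_jwhere : forall m j, vconv_j (JWhere j m) (norm_jwhere j m).
Proof.
  induction m; intros; try (rewrite norm_jwhere_nW by reflexivity; apply rt_refl).
  eapply rt_trans; [apply rt_step; right; left; apply E1_j|].
  eapply rt_trans; [apply vconv_jwherel, IHm1 | apply IHm2].
Qed.

Lemma vconv_norm_jmp : forall t k, vconv_j (Jmp k t) (norm_jmp k t).
Proof.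
  induction t; intros; try (rewrite norm_jmp_nW by reflexivity; apply rt_refl).
  eapply rt_trans; [apply rt_step; right; left; apply E3|].
  eapply rt_trans; [apply vconv_jwherel, IHt1 | apply vconv_norm_jwhere].
Qed.

Lemma vconv_norm_mu : forall j, vconv_t (Mu j) (norm_mu j).
Proof.
  induction j as [k t|j IHj t]; simpl.
  - destruct (Nat.eqb_spec k 0) as [->|]; destruct (cfree_t 0 t) eqn:E; try apply rt_refl.
    apply rt_step; left; constructor; assumption.
  - destruct (cfree_t 0 t) eqn:E; [apply rt_refl|].
    apply rt_trans with (Where (Mu j) (unshc_t 0 t)).
    { apply rt_step; right; right. rewrite <- ((proj1 shc_unshc) t 0 E) at 2. apply E2. }
    eapply rt_trans; [apply vconv_wherel, IHj | apply vconv_norm_where].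
Qed.

Lemma vconv_norm : (forall t, vconv_t t (norm_t t)) /\ (forall j, vconv_j j (norm_j j)).
Proof.
  apply term_jump_ind; intros; simpl.
  - apply rt_refl.
  - apply vconv_lam; assumption.
  - eapply rt_trans; [apply vconv_appl, H | apply vconv_appr, H0].
  - eapply rt_trans; [apply vconv_wherel, H|].
    eapply rt_trans; [apply vconv_wherer, H0 | apply vconv_norm_where].
  - eapply rt_trans; [apply vconv_mu, H | apply vconv_norm_mu].
  - eapply rt_trans; [apply vconv_jmp, H | apply vconv_norm_jmp].
  - eapply rt_trans; [apply vconv_jwherel, H|].
    eapply rt_trans; [apply vconv_jwherer, H0 | apply vconv_norm_jwhere].
Qed.

(* A congruence step in front of a reduction is absorbed into its first
   vertical step, [vred] being defined modulo [ceq_t]. *)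
Lemma vred_star_ceq_l x y P : ceq_t x y -> vred_star y P ->
  exists P', vred_star x P' /\ ceq_t P' P.
Proof.
  intros Hxy Hy. apply clos_rt_rt1n in Hy. destruct Hy as [|w Q Hyw HwQ].
  - exists x. split; [apply rt_refl | assumption].
  - exists Q. split; [|apply rst_refl].
    destruct Hyw as (M' & N' & HM & HN).
    apply rt_trans with w; [|apply clos_rt1n_rt; assumption].
    apply rt_step; exists M', N'; split; [eapply rst_trans; eassumption | exact HN].
Qed.

Lemma vconv_vred_star M P : vconv_t M P -> exists P', vred_star M P' /\ ceq_t P' P.
Proof.
  intro H. apply clos_rt_rt1n in H. induction H as [x|x y P Hxy _ (P' & HyP' & HP')].
  - exists x. split; [apply rt_refl | apply rst_refl].
  - destruct Hxy as [Hstep|[Hceq|Hceq]].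
    + exists P'. split; [|assumption].
      apply rt_trans with y; [|assumption].
      apply rt_step; exists x, y; split; [apply rst_refl | split; [assumption | apply rst_refl]].
    + destruct (vred_star_ceq_l x y P' (rst_step _ _ _ _ Hceq) HyP') as (Q & HxQ & HQ).
      exists Q. split; [assumption | eapply rst_trans; eassumption].
    + destruct (vred_star_ceq_l x y P' (rst_sym _ _ _ _ (rst_step _ _ _ _ Hceq)) HyP')
        as (Q & HxQ & HQ).
      exists Q. split; [assumption | eapply rst_trans; eassumption].
Qed.

(** * Counting mu-binders *)

Fixpoint mu_count_t (t : term) : nat :=
  match t with
  | Var _ => 0
  | Lam t => mu_count_t t
  | App t u => mu_count_t t + mu_count_t u
  | Where l m => mu_count_t l + mu_count_t m
  | Mu j => S (mu_count_j j)
  end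
with mu_count_j (j : jump) : nat :=
  match j with
  | Jmp _ t => mu_count_t t
  | JWhere j m => mu_count_j j + mu_count_t m
  end.

Lemma mu_count_shv :
  (forall t c, mu_count_t (shv_t c t) = mu_count_t t) /\
  (forall j c, mu_count_j (shv_j c j) = mu_count_j j).
Proof. apply term_jump_ind; intros; simpl; rewrite ?H, ?H0; auto. Qed.

Lemma mu_count_shc :
  (forall t c, mu_count_t (shc_t c t) = mu_count_t t) /\
  (forall j c, mu_count_j (shc_j c j) = mu_count_j j).
Proof. apply term_jump_ind; intros; simpl; rewrite ?H, ?H0; auto. Qed.

Lemma mu_count_unshc :
  (forall t c, mu_count_t (unshc_t c t) = mu_count_t t) /\
  (forall j c, mu_count_j (unshc_j c j) = mu_count_j j).
Proof. apply term_jump_ind; intros; simpl; rewrite ?H, ?H0; auto. Qed.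

Lemma mu_count_ceq1 :
  (forall t u, ceq1_t t u -> mu_count_t t = mu_count_t u) /\
  (forall j k, ceq1_j j k -> mu_count_j j = mu_count_j k).
Proof.
  apply ceq1_ind; intros; simpl;
    rewrite ?(proj1 mu_count_shv), ?(proj2 mu_count_shv), ?(proj1 mu_count_shc); lia.
Qed.

Lemma mu_count_ceq t u : ceq_t t u -> mu_count_t t = mu_count_t u.
Proof. induction 1; try lia. apply (proj1 mu_count_ceq1); assumption. Qed.

Lemma mu_count_vstep :
  (forall t u, vstep_t t u -> mu_count_t u < mu_count_t t) /\
  (forall j k, vstep_j j k -> mu_count_j k < mu_count_j j).
Proof. apply vstep_ind; intros; simpl; rewrite ?(proj1 mu_count_unshc); lia. Qed.

Lemma mu_count_vred M N : vred M N -> mu_count_t N < mu_count_t M.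
Proof.
  intros (M' & N' & HM & Hstep & HN).
  rewrite (mu_count_ceq _ _ HM), <- (mu_count_ceq _ _ HN).
  exact (proj1 mu_count_vstep _ _ Hstep).
Qed.

Theorem lemma1p21 : vred_SN /\ vred_confluent.
Proof.
  split.
  - intro M. apply (well_founded_lt_compat term mu_count_t).
    intros N M' HN. exact (mu_count_vred _ _ HN).
  - intros M N1 N2 H1 H2.
    destruct (vconv_vred_star _ _ (proj1 vconv_norm N1)) as (P1 & HP1 & HQ1).
    destruct (vconv_vred_star _ _ (proj1 vconv_norm N2)) as (P2 & HP2 & HQ2).
    exists P1, P2. repeat split; [assumption | assumption |].
    rewrite <- (norm_vred_star _ _ H1), (norm_vred_star _ _ H2) in HQ1.
    eapply rst_trans; [exact HQ1 | apply rst_sym, HQ2].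
Qed.
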